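(* Fix $\varepsilon>0$ and consider the $q$-stage multistep Frank–Wolfe method (defined in the context) applied to minimizing over $[-1,1]$ the function $f(\mathbf x)=\mathbf x^2/2$ if $|\mathbf x|<\varepsilon$, $\varepsilon\mathbf x-\varepsilon^2/2$ if $\mathbf x\ge\varepsilon$, $-\varepsilon\mathbf x-\varepsilon^2/2$ if $\mathbf x\le-\varepsilon$, with $\mathrm{LMO}(\mathbf x)=-\mathrm{sign}(\mathbf x)$ and $\mathbf x_0=1$. Assume $0<q\mathbf P^{(k)}\beta<1$ entrywise for all $k$. Then there exist a finite $\tilde k$ and a constant $C_2\ge0$ such that $|\mathbf x_k|\le\frac{C_2}{k}$ for all $k>\tilde k$.
   Context: The method has parameters $A\in\mathbb R^{q\times q}$ strictly lower triangular, $\beta\in\mathbb R^q$ with $\sum_i\beta_i=1$, $\omega\in\mathbb R^q$ with $\omega_1=0$, $c>0$; given $\mathbf x_k$ it computes for $i=1,\dots,q$: $\bar{\mathbf x}_i=\mathbf x_k+\sum_jA_{ij}\xi_j$, $\xi_i=\frac{c}{c+k+\omega_i}(\mathrm{LMO}(\bar{\mathbf x}_i)-\bar{\mathbf x}_i)$, and $\mathbf x_{k+1}=\mathbf x_k+\sum_i\beta_i\xi_i$. Here $\Gamma^{(k)}=\mathrm{diag}\big(\frac{c}{c+k+\omega_i}\big)$ and $\mathbf P^{(k)}=\Gamma^{(k)}(I+A^T\Gamma^{(k)})^{-1}$. *)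

From HB Require Import structures.
From mathcomp Require Import all_boot all_order all_algebra.
Set Implicit Arguments. Unset Strict Implicit. Unset Printing Implicit Defensive.
Import Order.TTheory GRing.Theory Num.Theory.
Local Open Scope ring_scope.

Section MFW.
Variable R : realFieldType.

Definition fhub (eps x : R) : R :=
  if `|x| < eps then x ^+ 2 / 2
  else if eps <= x then eps * x - eps ^+ 2 / 2
  else - eps * x - eps ^+ 2 / 2.

Definition LMO (x : R) : R := - Num.sg x.

Variable q : nat.

(* nat-indexed access to matrix entries (0 outside the range). *)
Definition mxat (A : 'M[R]_q) (i j : nat) : R :=
  match insub i, insub j with
  | Some i', Some j' => A i' j'
  | _, _ => 0
  end.

Definition vat (v : 'I_q -> R) (i : nat) : R :=
  match insub i with Some i' => v i' | None => 0 end.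

Definition gam (c : R) (om : 'I_q -> R) (k : nat) (i : 'I_q) : R :=
  c / (c + k%:R + om i).

Definition Gam (c : R) (om : 'I_q -> R) (k : nat) : 'M[R]_q :=
  diag_mx (\row_i gam c om k i).

Definition Pk (A : 'M[R]_q) (c : R) (om : 'I_q -> R) (k : nat) : 'M[R]_q :=
  Gam c om k *m invmx (1%:M + A^T *m Gam c om k).

(* The stages xi_0, ..., xi_{n-1} at iteration k from point x:
   xbar_i = x + sum_{j<i} A_ij xi_j  (A strictly lower triangular),
   xi_i   = Gamma^(k)_i (LMO(xbar_i) - xbar_i). *)
Fixpoint xis (A : 'M[R]_q) (c : R) (om : 'I_q -> R) (k : nat) (x : R) (n : nat)
  : seq R :=
  match n with
  | 0 => [::]
  | n'.+1 =>
      let s := xis A c om k x n' in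
      let xb := x + \sum_(j < n') mxat A n' j * s`_j in
      rcons s (vat (gam c om k) n' * (LMO xb - xb))
  end.

Definition mfw_step (A : 'M[R]_q) (beta : 'cV[R]_q) (c : R) (om : 'I_q -> R)
  (k : nat) (x : R) : R :=
  x + \sum_(i < q) beta i 0 * (xis A c om k x q)`_i.

Fixpoint mfw_iter (A : 'M[R]_q) (beta : 'cV[R]_q) (c : R) (om : 'I_q -> R)
  (k : nat) : R :=
  match k with
  | 0 => 1
  | k'.+1 => mfw_step A beta c om k' (mfw_iter A beta c om k')
  end.

End MFW.

From HB Require Import structures.
From mathcomp Require Import all_boot all_order all_algebra ring lra zify.
From Stdlib Require Import Classical.
Set Implicit Arguments. Unset Strict Implicit. Unset Printing Implicit Defensive.
Import Order.TTheory GRing.Theory Num.Theory.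
Local Open Scope ring_scope.

(* Write [v = P^(k) beta] and [rho_k = sum_i v_i].  Since [xi = Gamma (LMO xbar - xbar)] with
   [xbar = x + A xi], one step reads [x_(k+1) = (1 - rho_k) x_k + sum_i v_i LMO(xbar_i)], and
   [0 < v_i < 1/q] gives [0 < rho_k < 1], hence [|x_k| <= 1].  As [Gamma^(k) = (c/k) (I + O(1/k))],
   [k rho_k] tends to [c] and [|xbar_i - x_k| = O(1/k)].  So once [k |x_k|] exceeds a constant [D],
   every [xbar_i] has the sign of [x_k] and the step either lowers [|x_k|] by [rho_k] or overshoots
   to [|x_(k+1)| <= rho_k]; in any case [|x_(k+1)| <= |x_k| + rho_k].  Since [sum rho_k] diverges,
   [k |x_k|] eventually drops below [2 (D + sup k rho_k)], and these three cases keep it there.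
   The objective only enters through its LMO. *)

Lemma ler_term_sum (R : numDomainType) (I : finType) (F : I -> R) (i : I) :
  (forall j, 0 <= F j) -> F i <= \sum_j F j.
Proof. by move=> F_ge0; rewrite (bigD1 i) //= lerDl sumr_ge0. Qed.

Section EntrywiseNorm.
Variables (R : numDomainType) (m n : nat).

Definition mx_norm1 (M : 'M[R]_(m, n)) := \sum_i \sum_j `|M i j|.

Lemma mx_norm1_ge0 (M : 'M[R]_(m, n)) : 0 <= mx_norm1 M.
Proof. by apply: sumr_ge0 => i _; apply: sumr_ge0. Qed.

Lemma norm_sum_mul_le (I : finType) (w z : I -> R) :
  `|\sum_j w j * z j| <= (\sum_j `|w j|) * \sum_j `|z j|.
Proof.
apply: (le_trans (ler_norm_sum _ _ _)); rewrite mulr_suml; apply: ler_sum => j _.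
by rewrite normrM ler_wpM2l //; apply: (ler_term_sum (F := fun j => `|z j|)).
Qed.

Lemma norm_mx_row_mul_le (M : 'M[R]_(m, n)) (i : 'I_m) (z : 'I_n -> R) :
  `|\sum_j M i j * z j| <= mx_norm1 M * \sum_j `|z j|.
Proof.
apply: (le_trans (norm_sum_mul_le _ _)); apply: ler_wpM2r; first exact: sumr_ge0.
by apply: (ler_term_sum (F := fun i => \sum_j `|M i j|)) => i'; apply: sumr_ge0.
Qed.

Lemma sum_norm_mx_col_mul_le (M : 'M[R]_(m, n)) (z : 'I_m -> R) :
  \sum_j `|\sum_i M i j * z i| <= mx_norm1 M * \sum_i `|z i|.
Proof.
rewrite /mx_norm1 exchange_big /= mulr_suml; apply: ler_sum => j _.
exact: (le_trans (norm_sum_mul_le _ _)).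
Qed.

End EntrywiseNorm.

Lemma sgr_eq_near (R : realDomainType) (a x : R) : `|a - x| < `|x| -> Num.sg a = Num.sg x.
Proof.
case: (ltrgt0P x) => [x_gt0 | x_lt0 | _]; last by rewrite ltNge normr_ge0.
- by rewrite ltr_norml => /andP [h1 h2]; rewrite !gtr0_sg //; lra.
- by rewrite ltr_norml => /andP [h1 h2]; rewrite !ltr0_sg //; lra.
Qed.

Lemma normr_LMO_le1 (R : realFieldType) (x : R) : `|LMO x| <= 1.
Proof. by rewrite /LMO normrN normr_sg; case: (_ != 0). Qed.

Section InverseLinearDecay.
Variable R : realFieldType.
Variables (u s : nat -> R) (B D E kap : R) (K : nat).
Hypotheses (kap_gt0 : 0 < kap) (D_ge0 : 0 <= D).
Hypotheses (u_ge0 : forall k, 0 <= u k) (u_le : forall k, u k <= B).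
Hypothesis s_lb : forall k, (K <= k)%N -> kap <= k%:R * s k.
Hypothesis s_ub : forall k, (K <= k)%N -> k%:R * s k <= E.
Hypothesis u_step : forall k, (K <= k)%N -> u k.+1 <= u k + s k.
Hypothesis u_descent : forall k, (K <= k)%N -> D < k%:R * u k ->
  u k.+1 <= u k - s k \/ u k.+1 <= s k.

Let C := 2 * (D + E).

Lemma index_ge1 k : (K <= k)%N -> 1 <= k%:R :> R.
Proof.
move=> Kk; rewrite ler1n lt0n; apply/eqP => k0.
by have := s_lb Kk; rewrite k0 mul0r leNgt kap_gt0.
Qed.

Lemma s_ge0 k : (K <= k)%N -> 0 <= s k.
Proof.
move=> Kk; have k_gt0 : 0 < k%:R :> R by have := index_ge1 Kk; lra.
by rewrite -(pmulr_rge0 _ k_gt0) (le_trans (ltW kap_gt0) (s_lb Kk)).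
Qed.

Lemma scaled_overshoot_le k : (K <= k)%N -> u k.+1 <= s k ->
  k.+1%:R * u k.+1 <= 2 * E.
Proof.
move=> Kk le_u; have k_ge1 := index_ge1 Kk; have s0 := s_ge0 Kk.
have := s_ub Kk; rewrite [k.+1%:R]mulrSr; nra.
Qed.

Lemma scaled_bound_step k : (K <= k)%N -> C <= kap * k%:R ->
  k%:R * u k <= C -> k.+1%:R * u k.+1 <= C.
Proof.
move=> Kk C_le le_C; have k_ge1 := index_ge1 Kk; have s0 := s_ge0 Kk.
have u0 := u_ge0 k; have E_ge := s_ub Kk; have kap_le := s_lb Kk.
case: (leP (k%:R * u k) D) => [le_D | lt_D].
  have le_u := u_step Kk; rewrite [k.+1%:R]mulrSr /C.
  have : (k%:R + 1) * u k.+1 <= (k%:R + 1) * (u k + s k) by rewrite ler_pM2l; lra.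
  have : 0 <= (k%:R - 1) * (u k + s k) by apply: mulr_ge0; lra.
  have := D_ge0; nra.
case: (u_descent Kk lt_D) => [le_u | le_u]; last first.
  by have := scaled_overshoot_le Kk le_u; have := D_ge0; rewrite /C; lra.
(* [(k + 1) (u_k - s_k) <= k u_k] as [u_k <= kap <= k s_k], by [k u_k <= C <= kap k]. *)
have u_le_kap : u k <= kap by rewrite -(ler_pM2r (_ : 0 < k%:R)); lra.
rewrite [k.+1%:R]mulrSr; nra.
Qed.

Lemma descent_above_bound k : (K <= k)%N -> C < k%:R * u k ->
  C < k.+1%:R * u k.+1 -> u k.+1 <= u k - s k.
Proof.
move=> Kk; have := s_ub Kk; have := s_lb Kk; have := kap_gt0; have := D_ge0.
rewrite /C => D0 kap0 kap_le E_ge lt_C lt_C'.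
have lt_D : D < k%:R * u k by lra.
case: (u_descent Kk lt_D) => // le_u.
by have := scaled_overshoot_le Kk le_u; lra.
Qed.

Lemma descent_doubling m : (K <= m)%N ->
  (forall k, (m <= k)%N -> u k.+1 <= u k - s k) -> u (m + m) <= u m - kap / 2.
Proof.
move=> Km dec; have m_ge1 := index_ge1 Km.
suff : forall n, (n <= m)%N -> u (m + n) <= u m - n%:R * (kap / (2 * m%:R)).
  move/(_ m (leqnn m)); suff -> : m%:R * (kap / (2 * m%:R)) = kap / 2 by [].
  by field; rewrite gt_eqF //; lra.
elim=> [_ | n IH lt_nm]; first by rewrite addn0 mul0r subr0.
have Kmn : (K <= m + n)%N by lia.
have s_ge : kap / (2 * m%:R) <= s (m + n).
  rewrite ler_pdivrMr; last by lra.
  apply: (le_trans (s_lb Kmn)); rewrite mulrC ler_wpM2l ?s_ge0 //.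
  by rewrite -natrM ler_nat; lia.
have := dec _ (leq_addr n m); rewrite addnS.
by have := IH (ltnW lt_nm); rewrite [n.+1%:R]mulrSr; lra.
Qed.

Hypothesis archi : forall r : R, exists n : nat, r < n%:R.

Lemma scaled_bound_reached K1 : (K <= K1)%N ->
  exists2 k, (K1 <= k)%N & k%:R * u k <= C.
Proof.
move=> KK1; apply: NNPP => not_reached.
have lt_C k : (K1 <= k)%N -> C < k%:R * u k.
  move=> K1k; rewrite ltNge; apply/negP => le_C; apply: not_reached; by exists k.
have dec k : (K1 <= k)%N -> u k.+1 <= u k - s k.
  move=> K1k; apply: descent_above_bound; [lia | exact: lt_C | apply: lt_C; lia].
(* [sum s_k] diverges: [u] loses [kap / 2] on every block [[K1 2^j, K1 2^(j+1)]]. *)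
have K1_gt0 : (0 < K1)%N by have := index_ge1 KK1; rewrite ler1n.
have drop j : u (K1 * 2 ^ j) <= B - j%:R * (kap / 2).
  elim: j => [|j IH]; first by rewrite mul0r subr0.
  have -> : (K1 * 2 ^ j.+1 = K1 * 2 ^ j + K1 * 2 ^ j)%N by rewrite expnS; lia.
  have Km : (K <= K1 * 2 ^ j)%N by rewrite (leq_trans KK1) // leq_pmulr // expn_gt0.
  have := descent_doubling Km (fun k mk => dec k (leq_trans (leq_pmulr _ (expn_gt0 2 j)) mk)).
  by rewrite [j.+1%:R]mulrSr; lra.
have [j lt_j] := archi (2 * B / kap).
have := drop j; have := u_ge0 (K1 * 2 ^ j).
rewrite ltr_pdivrMr // in lt_j; lra.
Qed.

Theorem inverse_linear_decay : exists (kt : nat) (C2 : R), 0 <= C2 /\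
  forall k : nat, (kt < k)%N -> u k <= C2 / k%:R.
Proof.
have [N lt_N] := archi (C / kap).
have [k0 Kk0 le_C] := scaled_bound_reached (leq_addr N K).
exists k0, C; split => [|k lt_k].
  have := s_lb (leqnn K); have := s_ub (leqnn K); have := kap_gt0; have := D_ge0.
  by rewrite /C; lra.
have scaled_le n : (k0 + n)%:R * u (k0 + n) <= C.
  elim: n => [|n IH]; first by rewrite addn0.
  rewrite addnS; apply: scaled_bound_step => //; first by lia.
  rewrite mulrC -ler_pdivrMr // (le_trans (ltW lt_N)) // ler_nat; lia.
have := scaled_le (k - k0)%N; rewrite subnKC ?(ltnW lt_k) // => le_k.
have k_gt0 : (0 < k)%N by lia.
by rewrite ler_pdivlMr ?ltr0n // mulrC.
Qed.

End InverseLinearDecay.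


Section MultistepFrankWolfe.
Variables (R : realFieldType) (q : nat) (A : 'M[R]_q) (c : R) (om : 'I_q -> R).
Hypothesis A_lower : forall i j : 'I_q, (i <= j)%N -> A i j = 0.

Lemma size_xis k x n : size (xis A c om k x n) = n.
Proof. by elim: n => //= n IH; rewrite size_rcons IH. Qed.

Lemma nth_xis_le k x n m i : (i < n)%N -> (n <= m)%N ->
  (xis A c om k x m)`_i = (xis A c om k x n)`_i.
Proof.
move=> lt_in; elim: m => [|m IH]; first by rewrite leqn0 => /eqP ->.
rewrite leq_eqVlt => /orP [/eqP -> // | lt_nm].
by rewrite /= nth_rcons size_xis (leq_trans lt_in lt_nm) IH.
Qed.

Definition xi k x (i : 'I_q) := (xis A c om k x q)`_i.
Definition xbar k x (i : 'I_q) := x + \sum_j A i j * xi k x j.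

Lemma xiE k x i : xi k x i = gam c om k i * (LMO (xbar k x i) - xbar k x i).
Proof.
rewrite /xi (nth_xis_le _ _ (ltnSn i) (ltn_ord i)) /= nth_rcons size_xis ltnn eqxx.
rewrite /vat valK /xbar.
suff -> : \sum_(j < i) mxat A i j * (xis A c om k x i)`_j = \sum_j A i j * xi k x j by [].
pose F j := mxat A i j * (xis A c om k x q)`_j.
have -> : \sum_j A i j * xi k x j = \sum_(0 <= j < q) F j.
  by rewrite big_mkord; apply: eq_bigr => j _; rewrite /F /mxat !valK.
rewrite (@big_cat_nat _ _ _ i) /= ?(ltnW (ltn_ord i)) //.
have -> : \sum_(i <= j < q) F j = 0.
  rewrite big_nat_cond big1 // => j /andP [/andP [le_ij lt_jq] _].
  by rewrite /F /mxat valK insubT /= A_lower ?mul0r.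
rewrite addr0 big_mkord; apply: eq_bigr => j _.
by rewrite /F (nth_xis_le _ _ (ltn_ord j) (ltnW (ltn_ord i))).
Qed.

Variable beta : 'cV[R]_q.

Definition stage_mx k : 'M[R]_q := 1%:M + A^T *m Gam c om k.
(* [P^(k) beta = Gamma y] where [(I + A^T Gamma) y = beta]. *)
Definition y k := invmx (stage_mx k) *m beta.
Definition v k i := (Pk A c om k *m beta) i 0.
Definition rho k := \sum_i v k i.

Lemma stage_mxE k i j : stage_mx k i j = (i == j)%:R + A j i * gam c om k j.
Proof. by rewrite /stage_mx /Gam mul_mx_diag !mxE. Qed.

Lemma stage_mx_unit k : stage_mx k \in unitmx.
Proof.
have diag1 i : stage_mx k i i = 1 by rewrite stage_mxE A_lower // mul0r addr0 eqxx.
rewrite unitmxE -det_tr det_trig; first by rewrite big1 ?unitr1 // => i _; rewrite mxE diag1.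
apply/is_trig_mxP => i j lt_ij; rewrite mxE stage_mxE A_lower ?(ltnW lt_ij) //.
by rewrite mul0r addr0; case: eqP lt_ij => // ->; rewrite ltnn.
Qed.

Lemma vE k i : v k i = gam c om k i * y k i 0.
Proof. by rewrite /v /Pk -mulmxA /Gam mul_diag_mx !mxE. Qed.

Lemma betaE k i : beta i 0 = y k i 0 + \sum_j A j i * v k j.
Proof.
have := mulKVmx (stage_mx_unit k) beta; rewrite -/(y k) => /matrixP /(_ i 0).
rewrite mxE => <-; rewrite (bigD1 i) //= stage_mxE eqxx mulrDl mul1r -addrA.
congr (_ + _); rewrite [RHS](bigD1 i) //= A_lower // !mul0r !add0r.
apply: eq_bigr => j ne_ji; rewrite stage_mxE eq_sym (negbTE ne_ji) add0r vE.
by rewrite mulrA.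
Qed.

Lemma sum_beta_xi k x : \sum_i beta i 0 * xi k x i = \sum_i v k i * (LMO (xbar k x i) - x).
Proof.
under eq_bigr do rewrite (betaE k) mulrDl big_distrl /=.
rewrite big_split /= exchange_big -big_split /=; apply: eq_bigr => j _.
have -> : \sum_i A j i * v k j * xi k x i = v k j * (xbar k x j - x).
  by rewrite /xbar addrC addKr mulr_sumr; apply: eq_bigr => i _; ring.
by rewrite xiE vE; ring.
Qed.

Local Notation iter k := (mfw_iter A beta c om k).

Lemma mfw_iterS k :
  iter k.+1 = (1 - rho k) * iter k + \sum_i v k i * LMO (xbar k (iter k) i).
Proof.
rewrite /= /mfw_step; set x := iter k.
rewrite (sum_beta_xi k x) (eq_bigr _ (fun i _ => mulrBr _ _ _)).
by rewrite sumrB -mulr_suml -/(rho k); ring.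
Qed.

Hypothesis q_gt0 : (0 < q)%N.
Hypothesis v_gt0 : forall k i, 0 < v k i.
Hypothesis qv_lt1 : forall k i, q%:R * v k i < 1.

Lemma rho_gt0 k : 0 < rho k.
Proof.
apply: (lt_le_trans (v_gt0 k (Ordinal q_gt0))).
by apply: ler_term_sum => i; apply: ltW.
Qed.

Lemma rho_lt1 k : rho k < 1.
Proof.
have q_pos : 0 < q%:R :> R by rewrite ltr0n.
have lt_q : \sum_(i < q) q%:R * v k i < \sum_(i < q) 1.
  by apply: ltr_sum => [|i _]; [apply/hasP; exists (Ordinal q_gt0) | exact: qv_lt1].
by rewrite -(ltr_pM2l q_pos) mulr1 /rho mulr_sumr (lt_le_trans lt_q) // sumr_const card_ord.
Qed.

Lemma norm_mfw_iterS_le k : `|iter k.+1| <= (1 - rho k) * `|iter k| + rho k.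
Proof.
have := rho_gt0 k; have := rho_lt1 k; move=> lt1 gt0.
rewrite mfw_iterS; apply: (le_trans (ler_normD _ _)); apply: lerD.
  by rewrite normrM ger0_norm //; lra.
apply: (le_trans (ler_norm_sum _ _ _)); apply: ler_sum => i _.
rewrite normrM gtr0_norm // ler_piMr //; [exact: ltW | exact: normr_LMO_le1].
Qed.

Lemma norm_mfw_iter_le1 k : `|iter k| <= 1.
Proof.
elim: k => [|k IH]; first by rewrite normr1.
have := norm_mfw_iterS_le k; have := rho_gt0 k; have := rho_lt1 k; nra.
Qed.

Lemma mfw_iterS_aligned k : iter k != 0 ->
  (forall i, Num.sg (xbar k (iter k) i) = Num.sg (iter k)) ->
  `|iter k.+1| <= `|iter k| - rho k \/ `|iter k.+1| <= rho k.
Proof.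
set x := iter k => x_neq0 aligned; rewrite mfw_iterS -/x.
under eq_bigr do rewrite /LMO aligned mulrN.
have -> : (1 - rho k) * x + \sum_i - (v k i * Num.sg x) =
    Num.sg x * ((1 - rho k) * `|x| - rho k).
  by rewrite sumrN -mulr_suml -{1}(mulr_sg_norm x) /rho; ring.
rewrite normrM normr_sg x_neq0 mul1r.
have := rho_gt0 k; have := rho_lt1 k; have := normr_ge0 x => x_ge0 lt1 gt0.
case: (lerP 0 ((1 - rho k) * `|x| - rho k)) => [ge0 | lt0].
  by left; rewrite ger0_norm //; nra.
by right; rewrite ltr0_norm //; nra.
Qed.

Definition alpha := mx_norm1 A.
Definition bnorm := \sum_i `|beta i 0|.
Definition gsum k := \sum_i `|gam c om k i|.

Lemma xbar_dev k x i : `|xbar k x i - x| <= alpha * \sum_j `|xi k x j|.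
Proof. by rewrite /xbar addrC addKr; apply: norm_mx_row_mul_le. Qed.

Lemma sum_norm_xi_le k x : `|x| <= 1 -> gsum k * alpha <= 1 / 2 ->
  \sum_j `|xi k x j| <= 4 * gsum k.
Proof.
move=> x_le1 small; set S := \sum_j `|xi k x j|.
have S_le : S <= gsum k * (2 + alpha * S).
  rewrite /S /gsum mulr_suml; apply: ler_sum => i _; rewrite xiE normrM ler_wpM2l //.
  have := xbar_dev k x i; have := normr_LMO_le1 (xbar k x i); rewrite -/S => L_le dev.
  have xb_le : `|xbar k x i| <= `|x| + `|xbar k x i - x|.
    by have := ler_normD x (xbar k x i - x); rewrite [x + _]addrC subrK.
  by apply: (le_trans (ler_normB _ _)); lra.
have S_ge0 : 0 <= S by apply: sumr_ge0.
have : gsum k * alpha * S <= 1 / 2 * S by apply: ler_wpM2r.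
lra.
Qed.

Lemma sum_norm_v_le_y k : \sum_i `|v k i| <= gsum k * \sum_i `|y k i 0|.
Proof.
rewrite /gsum mulr_suml; apply: ler_sum => i _; rewrite vE normrM ler_wpM2l //.
exact: (ler_term_sum (F := fun j => `|y k j 0|)).
Qed.

Lemma sum_norm_y_le k : gsum k * alpha <= 1 / 2 -> \sum_i `|y k i 0| <= 2 * bnorm.
Proof.
move=> small; set Y := \sum_i `|y k i 0|.
have Y_le : Y <= bnorm + alpha * \sum_i `|v k i|.
  apply: (le_trans _ (lerD (lexx _) (sum_norm_mx_col_mul_le A (v k)))).
  rewrite /Y /bnorm -big_split /=; apply: ler_sum => i _.
  have -> : y k i 0 = beta i 0 - \sum_j A j i * v k j by rewrite (betaE k i) addrK.
  exact: ler_normB.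
have := sum_norm_v_le_y k; rewrite -/Y => v_le.
have Y_ge0 : 0 <= Y by apply: sumr_ge0.
have : alpha * \sum_i `|v k i| <= alpha * (gsum k * Y) by rewrite ler_wpM2l ?mx_norm1_ge0.
have : gsum k * alpha * Y <= 1 / 2 * Y by apply: ler_wpM2r.
lra.
Qed.

Lemma sum_norm_v_le k : gsum k * alpha <= 1 / 2 -> \sum_i `|v k i| <= 2 * bnorm * gsum k.
Proof.
move=> small; apply: (le_trans (sum_norm_v_le_y k)); rewrite mulrC ler_wpM2r //.
  exact: sumr_ge0.
exact: sum_norm_y_le.
Qed.

Lemma rho_le k : gsum k * alpha <= 1 / 2 -> rho k <= 2 * bnorm * gsum k.
Proof.
move=> small; apply: le_trans (sum_norm_v_le small).
by apply: (le_trans (ler_norm _)); apply: ler_norm_sum.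
Qed.

Lemma rho_ge k : gsum k * alpha <= 1 / 2 ->
  \sum_i gam c om k i * beta i 0 - 2 * alpha * bnorm * gsum k ^+ 2 <= rho k.
Proof.
move=> small; pose w i := \sum_j A j i * v k j.
have -> : rho k = \sum_i gam c om k i * beta i 0 - \sum_i gam c om k i * w i.
  by rewrite -sumrB; apply: eq_bigr => i _; rewrite vE (betaE k i) -/(w i); ring.
rewrite lerB //; apply: (le_trans (ler_norm _)).
apply: (le_trans (norm_sum_mul_le _ _)); rewrite -/(gsum k).
have w_le : \sum_i `|w i| <= alpha * (2 * bnorm * gsum k).
  apply: (le_trans (sum_norm_mx_col_mul_le A (v k))).
  by rewrite ler_wpM2l ?mx_norm1_ge0 ?sum_norm_v_le.
have g_ge0 : 0 <= gsum k by apply: sumr_ge0.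
by apply: (le_trans (ler_wpM2l g_ge0 w_le)); rewrite expr2; lra.
Qed.

Hypothesis c_gt0 : 0 < c.
Hypothesis beta_sum1 : \sum_i beta i 0 = 1.

Definition offset := \sum_i `|c + om i|.

Lemma gam_bounds k i : 1 <= k%:R :> R -> 2 * offset <= k%:R ->
  [/\ 0 <= gam c om k i, k%:R * gam c om k i <= 2 * c &
      k%:R * `|k%:R * gam c om k i - c| <= 2 * c * offset].
Proof.
move=> k_ge1 k_ge; have c0 := c_gt0.
have d_le : `|c + om i| <= offset by apply: (ler_term_sum (F := fun j => `|c + om j|)).
have := ler_norm (- (c + om i)); rewrite normrN => d_ge.
rewrite /gam; set den := c + k%:R + om i.
have den_ge : k%:R <= 2 * den by rewrite /den; lra.
have den_gt0 : 0 < den by lra.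
split; first by rewrite divr_ge0 // ltW.
  by rewrite mulrA ler_pdivrMr //; nra.
have -> : k%:R * (c / den) - c = - (c * (c + om i)) / den.
  by rewrite /den; field; rewrite -/den gt_eqF.
rewrite normrM normrN normrM (gtr0_norm c0) (gtr0_norm (_ : 0 < den^-1)) ?invr_gt0 //.
rewrite mulrA ler_pdivrMr //.
have := normr_ge0 (c + om i) => d_ge0.
have : c * `|c + om i| <= c * offset by rewrite ler_wpM2l // ltW.
have : 0 <= (2 * den - k%:R) * (c * `|c + om i|) by rewrite mulr_ge0 ?subr_ge0 ?mulr_ge0 // ltW.
nra.
Qed.

Let G := 2 * c * q%:R.
(* [k rho_k >= c - Q / k]: [Q] collects the two [O(1/k)] error terms. *)
Let Q := 2 * c * offset * bnorm + 2 * alpha * bnorm * G ^+ 2.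

Lemma scaled_gsum_le k : 1 <= k%:R :> R -> 2 * offset <= k%:R -> k%:R * gsum k <= G.
Proof.
move=> k_ge1 k_ge; have -> : G = \sum_(i < q) 2 * c by rewrite sumr_const card_ord /G mulr_natr.
rewrite /gsum mulr_sumr.
apply: ler_sum => i _; have [gam_ge0 gam_le _] := gam_bounds i k_ge1 k_ge.
by rewrite ger0_norm.
Qed.

Lemma scaled_sum_gam_beta_dev k : 1 <= k%:R :> R -> 2 * offset <= k%:R ->
  k%:R * `|k%:R * \sum_i gam c om k i * beta i 0 - c| <= 2 * c * offset * bnorm.
Proof.
move=> k_ge1 k_ge.
have -> : k%:R * \sum_i gam c om k i * beta i 0 - c =
    \sum_i (k%:R * gam c om k i - c) * beta i 0.
  rewrite (eq_bigr _ (fun i _ => mulrBl _ _ _)) sumrB -mulr_sumr beta_sum1 mulr1.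
  by rewrite mulr_sumr; congr (_ - _); apply: eq_bigr => i _; rewrite mulrA.
apply: (le_trans (ler_wpM2l (ler0n _ k) (ler_norm_sum _ _ _))).
rewrite /bnorm mulr_sumr [leRHS]mulr_sumr; apply: ler_sum => i _.
have [_ _ dev] := gam_bounds i k_ge1 k_ge.
by rewrite normrM mulrA; apply: ler_wpM2r.
Qed.

Definition large k := [/\ 1 <= k%:R :> R, 2 * offset <= k%:R,
  2 * alpha * G <= k%:R & 2 * Q <= c * k%:R].

Lemma large_gsum_alpha_le k : large k -> gsum k * alpha <= 1 / 2.
Proof.
move=> [k_ge1 k_ge kG _]; have := scaled_gsum_le k_ge1 k_ge.
have := mx_norm1_ge0 A; rewrite -/alpha => alpha_ge0 scaled_le.
have : k%:R * gsum k * alpha <= G * alpha by rewrite ler_wpM2r.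
have g_ge0 : 0 <= gsum k by apply: sumr_ge0.
rewrite -(ler_pM2l (_ : 0 < k%:R)); last by lra.
nra.
Qed.

Lemma large_scaled_rho_le k : large k -> k%:R * rho k <= 2 * bnorm * G.
Proof.
move=> lk; have [k_ge1 k_ge _ _] := lk.
have bnorm2_ge0 : 0 <= 2 * bnorm by rewrite mulr_ge0 ?sumr_ge0.
have := ler_wpM2l bnorm2_ge0 (scaled_gsum_le k_ge1 k_ge).
have := ler_wpM2l (ler0n _ k) (rho_le (large_gsum_alpha_le lk)).
lra.
Qed.

Lemma large_scaled_rho_ge k : large k -> c / 2 <= k%:R * rho k.
Proof.
move=> lk; have [k_ge1 k_ge _ kQ] := lk.
have k_gt0 : 0 < k%:R :> R by lra.
set S := \sum_i gam c om k i * beta i 0.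
have dev : - (2 * c * offset * bnorm) <= k%:R * (k%:R * S - c).
  rewrite lerNl -mulrN; apply: le_trans (scaled_sum_gam_beta_dev k_ge1 k_ge).
  by rewrite ler_wpM2l // -normrN ler_norm.
have lower : k%:R * (k%:R * (S - 2 * alpha * bnorm * gsum k ^+ 2)) <= k%:R * (k%:R * rho k).
  by rewrite !ler_wpM2l ?rho_ge ?large_gsum_alpha_le // ltW.
have scaled_g : 2 * alpha * bnorm * (k%:R * gsum k) ^+ 2 <= 2 * alpha * bnorm * G ^+ 2.
  have c_ge0 : 0 <= c by apply: ltW.
  rewrite ler_wpM2l ?mulr_ge0 ?mx_norm1_ge0 ?sumr_ge0 // lerXn2r ?nnegrE ?mulr_ge0 ?sumr_ge0 //.
  exact: scaled_gsum_le.
rewrite -(ler_pM2l k_gt0); rewrite /Q in kQ; rewrite !expr2 in lower scaled_g kQ.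
nra.
Qed.

Lemma large_scaled_xbar_dev k x i : `|x| <= 1 -> large k ->
  k%:R * `|xbar k x i - x| <= 4 * alpha * G.
Proof.
move=> x_le1 lk; have [k_ge1 k_ge _ _] := lk.
have alpha_ge0 : 0 <= alpha by apply: mx_norm1_ge0.
have dev := le_trans (xbar_dev k x i)
  (ler_wpM2l alpha_ge0 (sum_norm_xi_le x_le1 (large_gsum_alpha_le lk))).
have := ler_wpM2l (ler0n _ k) dev; have := ler_wpM2l alpha_ge0 (scaled_gsum_le k_ge1 k_ge).
lra.
Qed.

Hypothesis archi : forall r : R, exists n : nat, r < n%:R.

Lemma large_eventually : exists K, forall k, (K <= k)%N -> large k.
Proof.
have [N lt_N] := archi (1 + 2 * offset + 2 * alpha * G + 2 * Q / c).
exists N => k le_Nk; have := ler_nat R N k; rewrite le_Nk => le_Nk'.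
have off_ge0 : 0 <= offset by apply: sumr_ge0.
have c_ge0 : 0 <= c by apply: ltW.
have bnorm_ge0 : 0 <= bnorm by apply: sumr_ge0.
have alpha_ge0 : 0 <= alpha by apply: mx_norm1_ge0.
have Q_ge0 : 0 <= 2 * Q / c.
  by rewrite divr_ge0 // mulr_ge0 // addr_ge0 // !mulr_ge0 // exprn_ge0 // /G !mulr_ge0.
have aG_ge0 : 0 <= 2 * alpha * G by rewrite /G !mulr_ge0.
split; try lra.
by rewrite -ler_pdivrMl //; lra.
Qed.

Theorem mfw_iter_inverse_linear : exists (kt : nat) (C2 : R), 0 <= C2 /\
  forall k : nat, (kt < k)%N -> `|iter k| <= C2 / k%:R.
Proof.
have [K large_K] := large_eventually.
have c0 := c_gt0; have alpha_ge0 : 0 <= alpha by apply: mx_norm1_ge0.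
apply: (inverse_linear_decay (u := fun k => `|iter k|) (s := rho) (B := 1)
  (D := 4 * alpha * G) (E := 2 * bnorm * G) (kap := c / 2) (K := K)) => //.
- by rewrite divr_gt0.
- by rewrite /G !mulr_ge0 // ltW.
- by move=> k; apply: norm_mfw_iter_le1.
- by move=> k /large_K; apply: large_scaled_rho_ge.
- by move=> k /large_K; apply: large_scaled_rho_le.
- move=> k _; have := norm_mfw_iterS_le k.
  by have := rho_gt0 k; have := normr_ge0 (iter k); nra.
move=> k /large_K lk lt_D; have x_le1 := norm_mfw_iter_le1 k.
have k_gt0 : 0 < k%:R :> R by case: lk => k_ge1 *; lra.
have dev_lt i : `|xbar k (iter k) i - iter k| < `|iter k|.
  by rewrite -(ltr_pM2l k_gt0); apply: le_lt_trans lt_D; apply: large_scaled_xbar_dev.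
apply: mfw_iterS_aligned => // [|i]; last exact: sgr_eq_near.
by rewrite -normr_gt0; apply: le_lt_trans (dev_lt (Ordinal q_gt0)); apply: normr_ge0.
Qed.

End MultistepFrankWolfe.

Lemma nat_bounded_or_archimedean (R : realFieldType) :
  (exists r : R, forall n : nat, n%:R <= r) \/ (forall r : R, exists n : nat, r < n%:R).
Proof.
case: (classic (forall r : R, exists n : nat, r < n%:R)) => [archi | not_archi]; [by right | left].
have [r /not_ex_all_not r_ub] := not_all_ex_not _ _ not_archi.
by exists r => n; rewrite leNgt; apply/negP/r_ub.
Qed.

Theorem lemma3 (R : realFieldType) (eps : R) (heps : 0 < eps)
  (q : nat) (hq : (0 < q)%N)
  (A : 'M[R]_q) (hA : forall i j : 'I_q, (i <= j)%N -> A i j = 0)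
  (beta : 'cV[R]_q) (hbeta : \sum_(i < q) beta i 0 = 1)
  (om : 'I_q -> R) (hom : forall i : 'I_q, val i = 0%N -> om i = 0)
  (c : R) (hc : 0 < c)
  (hP : forall (k : nat) (i : 'I_q),
      0 < (q%:R *: (Pk A c om k *m beta)) i 0 < 1) :
  exists (kt : nat) (C2 : R), 0 <= C2 /\
    forall k : nat, (kt < k)%N -> `|mfw_iter A beta c om k| <= C2 / k%:R.
Proof.
have q_gt0 : 0 < q%:R :> R by rewrite ltr0n.
have v_gt0 k i : 0 < v A c om beta k i.
  by have /andP [+ _] := hP k i; rewrite mxE pmulr_rgt0.
have qv_lt1 k i : q%:R * v A c om beta k i < 1.
  by have /andP [_ +] := hP k i; rewrite mxE.
case: (nat_bounded_or_archimedean R) => [[r r_ub] | archi].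
  exists 0%N, r; split => [|k k_gt0]; first exact: le_trans (r_ub 0%N).
  rewrite ler_pdivlMr ?ltr0n // (le_trans _ (r_ub k)) // ler_piMl //.
  exact: (norm_mfw_iter_le1 hA hq v_gt0 qv_lt1 k).
exact: mfw_iter_inverse_linear.
Qed.
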